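(* Let $\vec\sigma$ be a state assemblage on $\mathcal H_B$ with reduced state $\zeta$. For a linear map $\mathcal E$ on the operators on $\mathcal H_B$ with $p(\omega):=\mathrm{tr}[\mathcal E(\zeta)]>0$, write $\mathcal E(\vec\sigma)/p(\omega)$ for the state assemblage $\{\mathcal E(\sigma_{a|x})/p(\omega)\}_{a,x}$. Then $$\sup_{\mathcal E\in\mathrm{LF}_1,\ p(\omega)>0}\mathbb{SR}\left(\frac{\mathcal E(\vec\sigma)}{p(\omega)}\right)=\sup_{\mathcal E\in\mathrm{LF},\ p(\omega)>0}\mathbb{SR}\left(\frac{\mathcal E(\vec\sigma)}{p(\omega)}\right),$$ i.e. local filters with a single Kraus operator achieve the same maximal steering robustness as arbitrary local filters.
   Context: All Hilbert spaces are finite-dimensional. A measurement assemblage (MA) on $\mathcal H$ is a family $\vec M=\{M_{a|x}\}_{a,x}$, with $x$ ranging over a finite input set and $a$ over a finite outcome set $\mathcal A$, such that for each $x$, $\{M_{a|x}\}_a$ is a POVM. A state assemblage (SA) on $\mathcal H$ is a family $\vec\sigma=\{\sigma_{a|x}\}_{a,x}$ of positive semidefinite operators such that $\sum_a\sigma_{a|x}=\rho$ is independent of $x$ and $\mathrm{tr}\rho=1$; $\rho$ is called its reduced state. $\vec\sigma$ admits a local hidden state model, written $\vec\sigma\in\mathbb{LHS}$, if $\sigma_{a|x}=\sum_\lambda p(\lambda)p(a|x,\lambda)\rho_\lambda$ for some finite probability distribution $p(\lambda)$, conditional distributions $p(a|x,\lambda)$ and density operators $\rho_\lambda$. The steering robustness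 is $\mathbb{SR}(\vec\sigma)=\min\{t\ge0:\exists$ SA $\vec\xi$ and $\vec\tau\in\mathbb{LHS}$ with $(\sigma_{a|x}+t\xi_{a|x})/(1+t)=\tau_{a|x}\ \forall a,x\}$. $\mathrm{LF}$ denotes the set of local filters: completely positive, trace-non-increasing linear maps on the operators on $\mathcal H_B$. $\mathrm{LF}_1\subset\mathrm{LF}$ denotes the filters with a single Kraus operator, $\mathcal E(\cdot)=K(\cdot)K^\dagger$ with $K^\dagger K\le\mathbb 1$. *)

From HB Require Import structures.
From mathcomp Require Import all_boot all_order all_algebra.
From mathcomp Require Import complex.
From mathcomp Require Import all_classical all_reals all_analysis.
Set Implicit Arguments.
Unset Strict Implicit.
Unset Printing Implicit Defensive.
Import Order.TTheory GRing.Theory Num.Theory.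
Local Open Scope ring_scope.
Local Open Scope classical_set_scope.

Section QDefs.
Variable R : realType.
Local Notation C := R[i].

Definition adj (m n : nat) (M : 'M[C]_(m, n)) : 'M[C]_(n, m) :=
  (map_mx Num.conj M)^T.

(* Positive semidefinite operator on C^n: <v, M v> >= 0 for all v
   (over the complex field, 0 <= z means z real and nonnegative). *)
Definition psd (n : nat) (M : 'M[C]_n) : Prop :=
  forall v : 'cV[C]_n, 0 <= (adj v *m M *m v) ord0 ord0.

Definition loewner_le (n : nat) (A B : 'M[C]_n) : Prop := psd (B - A).

Definition density (n : nat) (rho : 'M[C]_n) : Prop :=
  psd rho /\ \tr rho = 1.

(* C^k (x) C^n is 'M_(k*n), indices via mxvec_index (i, r);
   pair_of_index is its inverse. *)
Definition pair_of_index (k n : nat) (p : 'I_(k * n)) : 'I_k * 'I_n :=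
  enum_val (cast_ord (esym (@mxvec_cast k n)) p).

Definition id_tensor (k n : nat) (E : 'M[C]_n -> 'M[C]_n)
  (Y : 'M[C]_(k * n)) : 'M[C]_(k * n) :=
  \matrix_(p, q)
    (let ir := pair_of_index p in
     let js := pair_of_index q in
     E (\matrix_(r, s) Y (mxvec_index ir.1 r) (mxvec_index js.1 s))
       ir.2 js.2).

Definition positive_map (n : nat) (E : 'M[C]_n -> 'M[C]_n) : Prop :=
  forall M, psd M -> psd (E M).

Definition completely_positive (n : nat) (E : 'M[C]_n -> 'M[C]_n) : Prop :=
  forall k : nat, forall Y : 'M[C]_(k * n), psd Y -> psd (id_tensor E Y).

Definition trace_nonincreasing (n : nat) (E : 'M[C]_n -> 'M[C]_n) : Prop :=
  forall M, psd M -> \tr (E M) <= \tr M.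

Definition LF (n : nat) (E : 'M[C]_n -> 'M[C]_n) : Prop :=
  linear E /\ completely_positive E /\ trace_nonincreasing E.

Definition LF1 (n : nat) (E : 'M[C]_n -> 'M[C]_n) : Prop :=
  LF E /\
  exists K : 'M[C]_n, loewner_le (adj K *m K) 1%:M /\
                      forall M, E M = K *m M *m adj K.

(* State assemblages sigma_{a|x}, x : X (inputs), a : A (outcomes). *)
Definition is_SA_red (X A : finType) (n : nat)
  (s : X -> A -> 'M[C]_n) (rho : 'M[C]_n) : Prop :=
  (forall x a, psd (s x a)) /\
  (forall x, \sum_(a : A) s x a = rho) /\ \tr rho = 1.

Definition is_SA (X A : finType) (n : nat) (s : X -> A -> 'M[C]_n) : Prop :=
  exists rho, is_SA_red s rho.

Definition LHS (X A : finType) (n : nat) (s : X -> A -> 'M[C]_n) : Prop :=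
  exists (m : nat) (p : 'I_m -> R) (q : 'I_m -> X -> A -> R)
         (rho : 'I_m -> 'M[C]_n),
    (forall l, 0 <= p l) /\ \sum_(l < m) p l = 1 /\
    (forall l x a, 0 <= q l x a) /\
    (forall l x, \sum_(a : A) q l x a = 1) /\
    (forall l, density (rho l)) /\
    (forall x a, s x a = \sum_(l < m) ((p l * q l x a)%:C)%C *: rho l).

(* Steering robustness, as an infimum in the extended reals
   (the paper's min; +oo if the feasible set were empty). *)
Definition SR (X A : finType) (n : nat) (s : X -> A -> 'M[C]_n) : \bar R :=
  ereal_inf [set (t%:E)%E | t in
    [set t : R | 0 <= t /\
      exists xi tau : X -> A -> 'M[C]_n,
        is_SA xi /\ LHS tau /\
        forall x a, ((1 + t)^-1)%:C%C *: (s x a + (t%:C)%C *: xi x a) = tau x a]].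

Definition filtered (X A : finType) (n : nat) (E : 'M[C]_n -> 'M[C]_n)
  (s : X -> A -> 'M[C]_n) (zeta : 'M[C]_n) : X -> A -> 'M[C]_n :=
  fun x a => (\tr (E zeta))^-1 *: E (s x a).

End QDefs.

(* By Choi's theorem every local filter E in LF has a Kraus
   decomposition E(M) = sum_l K_l M K_l^dag, and since E does not increase traces
   neither does any single term, so each M |-> K_l M K_l^dag lies in LF_1.  With
   p_l = tr(K_l zeta K_l^dag) and p = sum_l p_l = tr(E zeta), the assemblage
   E(sigma)/p is the convex combination, with weights p_l / p, of the assemblages
   K_l sigma K_l^dag / p_l with p_l > 0 (the other K_l annihilate sigma, which is
   dominated by zeta).  Feasibility of a robustness level t is preserved by convex
   combinations (state assemblages and LHS assemblages form convex sets) and is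
   upward closed in t, so SR(E(sigma)/p) is at most the supremum over LF_1; the
   reverse inequality is LF_1 being contained in LF. *)

From Pilot Require Import Defs.
From HB Require Import structures.
From mathcomp Require Import all_boot all_order all_algebra.
From mathcomp Require Import complex spectral.
From mathcomp Require Import all_classical all_reals all_analysis.
From mathcomp Require Import ring lra.
Import Order.TTheory GRing.Theory Num.Theory.
Set Implicit Arguments.
Unset Strict Implicit.
Unset Printing Implicit Defensive.
Local Open Scope ring_scope.

Section Adjoint.
Variable R : realType.
Local Notation C := R[i].

Lemma adjE m n (M : 'M[C]_(m, n)) i j : adj M i j = (M j i)^*.
Proof. by rewrite !mxE. Qed.

Lemma adjK m n (M : 'M[C]_(m, n)) : adj (adj M) = M.
Proof. by apply/matrixP => i j; rewrite !adjE conjCK. Qed.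

Lemma adjD m n (M N : 'M[C]_(m, n)) : adj (M + N) = adj M + adj N.
Proof. by apply/matrixP => i j; rewrite !mxE rmorphD. Qed.

Lemma adjZ m n c (M : 'M[C]_(m, n)) : adj (c *: M) = c^* *: adj M.
Proof. by apply/matrixP => i j; rewrite !mxE rmorphM. Qed.

Lemma adj_mul m n p (M : 'M[C]_(m, n)) (N : 'M[C]_(n, p)) :
  adj (M *m N) = adj N *m adj M.
Proof.
apply/matrixP => i j; rewrite !mxE rmorph_sum; apply: eq_bigr => k _.
by rewrite !mxE rmorphM mulrC.
Qed.

Lemma adj_delta m n (i : 'I_m) (j : 'I_n) :
  adj (delta_mx i j : 'M[C]_(m, n)) = delta_mx j i.
Proof.
apply/matrixP => a b; rewrite !mxE.
by case: (_ == _); case: (_ == _); rewrite ?conjC1 ?conjC0.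
Qed.

Lemma adj1mx n : adj (1%:M : 'M[C]_n) = 1%:M.
Proof.
by apply/matrixP => i j; rewrite !mxE eq_sym; case: eqP; rewrite ?conjC1 ?conjC0.
Qed.

End Adjoint.

Section PositiveSemidefinite.
Variable R : realType.
Local Notation C := R[i].

Lemma psd0 n : psd (0 : 'M[C]_n).
Proof. by move=> v; rewrite mulmx0 mul0mx mxE. Qed.

Lemma psdD n (M N : 'M[C]_n) : psd M -> psd N -> psd (M + N).
Proof. by move=> hM hN v; rewrite mulmxDr mulmxDl mxE addr_ge0. Qed.

Lemma psd_sum (I : Type) (r : seq I) (P : pred I) n (F : I -> 'M[C]_n) :
  (forall i, P i -> psd (F i)) -> psd (\sum_(i <- r | P i) F i).
Proof. by move=> hF; elim/big_ind: _ => //; [exact: psd0 | exact: psdD]. Qed.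

Lemma psdZ n c (M : 'M[C]_n) : 0 <= c -> psd M -> psd (c *: M).
Proof. by move=> c0 hM v; rewrite -scalemxAr -scalemxAl mxE mulr_ge0. Qed.

Lemma psd_congr m n (B : 'M[C]_(m, n)) (M : 'M[C]_n) :
  psd M -> psd (B *m M *m adj B).
Proof. by move=> hM v; have := hM (adj B *m v); rewrite adj_mul adjK !mulmxA. Qed.

Lemma psd1 n : psd (1%:M : 'M[C]_n).
Proof.
move=> v; rewrite mulmx1 mxE; apply: sumr_ge0 => i _.
by rewrite adjE mulrC mul_conjC_ge0.
Qed.

Lemma psd_gram m n (B : 'M[C]_(m, n)) : psd (B *m adj B).
Proof. by have := psd_congr B (@psd1 n); rewrite mulmx1. Qed.

Lemma qform_delta n (M : 'M[C]_n) i j :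
  delta_mx (0 : 'I_1) i *m M *m delta_mx j (0 : 'I_1) = (M i j)%:M.
Proof. by apply/matrixP => a b; rewrite !ord1 -rowE -colE !mxE. Qed.

Lemma qform_pair n (M : 'M[C]_n) i j c :
  let v := delta_mx i (0 : 'I_1) + c *: delta_mx j 0 in
  (adj v *m M *m v) 0 0 = M i i + c * M i j + c^* * M j i + c^* * c * M j j.
Proof.
rewrite /= adjD adjZ !adj_delta !mulmxDl !mulmxDr -!scalemxAl -!scalemxAr.
by rewrite !qform_delta !mxE /=; ring.
Qed.

Lemma psd_diag_ge0 n (M : 'M[C]_n) i : psd M -> 0 <= M i i.
Proof.
by move=> /(_ (delta_mx i 0)); rewrite adj_delta qform_delta mxE eqxx mulr1n.
Qed.

Lemma psd_trace_ge0 n (M : 'M[C]_n) : psd M -> 0 <= \tr M.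
Proof. by move=> hM; apply: sumr_ge0 => i _; exact: psd_diag_ge0. Qed.

Lemma ge0_conjC (z : C) : 0 <= z -> z^* = z.
Proof. by move=> z0; apply/CrealP; exact: ger0_real. Qed.

Lemma ge0_complexE (z : C) : 0 <= z -> ((complex.Re z)%:C)%C = z.
Proof. by move=> z0; rewrite RRe_real // ger0_real. Qed.

(* Polarization: the forms at [e_i + e_j] and [e_i + 'i e_j] are real. *)
Lemma psd_hermitian n (M : 'M[C]_n) i j : psd M -> M j i = (M i j)^*.
Proof.
move=> hM.
have form_real c : let z := M i i + c * M i j + c^* * M j i + c^* * c * M j j in
    z^* = z by rewrite -qform_pair; exact/ge0_conjC/hM.
have [dii djj] := (ge0_conjC (psd_diag_ge0 i hM), ge0_conjC (psd_diag_ge0 j hM)).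
have h1 := form_real 1; have hi := form_real 'i.
rewrite /= !rmorphD !rmorphM /= conjCK conjC1 dii djj in h1 hi.
set a := M i j in h1 hi *; set b := M j i in h1 hi *.
have ii : 'i * 'i = -1 :> C by rewrite -expr2 sqrCi.
have : 2 * (b - a^*) = 0.
  transitivity ((M i i + a + b + M j j) - (M i i + a^* + b^* + M j j)
    + 'i * ((M i i + 'i * a + - 'i * b + - 'i * 'i * M j j)
            - (M i i + - 'i * a^* + 'i * b^* + 'i * - 'i * M j j))).
    by ring: ii.
  have ci : ('i : C)^* = - 'i := conjCi _.
  by move: h1 hi; rewrite conjCK ci !mul1r => -> ->; rewrite !subrr mulr0 addr0.
by move/eqP; rewrite mulf_eq0 pnatr_eq0 /= subr_eq0 => /eqP.
Qed.

(* The diagonal vanishes, and then the form at [e_i - (M i j)^* e_j] is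
   [-2 |M i j|^2]. *)
Lemma psd_trace_eq0 n (M : 'M[C]_n) : psd M -> \tr M = 0 -> M = 0.
Proof.
move=> hM tr0.
have diag0 i : M i i = 0.
  apply/eqP; move/eqP: tr0; rewrite psumr_eq0 => [/allP/(_ i (mem_index_enum _))//|].
  by move=> k _; exact: psd_diag_ge0.
apply/matrixP => i j; rewrite mxE.
have := hM (delta_mx i 0 + (- (M i j)^*) *: delta_mx j 0).
rewrite qform_pair !diag0 (psd_hermitian j i hM) conjCK !(mulr0, addr0, add0r).
rewrite rmorphN !mulNr -opprD oppr_ge0 [_^* * _]mulrC -mulr2n pmulrn_lle0 // => hle.
have : M j i * (M j i)^* == 0 by rewrite eq_le hle mul_conjC_ge0.
by rewrite mul_conjC_eq0 => /eqP ->; rewrite conjC0.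
Qed.

Lemma loewner_le_trace_eq0 n (N P : 'M[C]_n) : psd N -> loewner_le N P -> \tr P = 0 -> N = 0.
Proof.
move=> psdN NP trP0; apply: psd_trace_eq0 => //; apply/eqP.
by rewrite eq_le psd_trace_ge0 // andbT -trP0 -subr_ge0 -raddfB psd_trace_ge0.
Qed.

End PositiveSemidefinite.

Section Sandwich.
Variable R : realType.
Local Notation C := R[i].

Definition sandwich n (K : 'M[C]_n) (M : 'M[C]_n) : 'M[C]_n := K *m M *m adj K.

Lemma linear_sandwich n (K : 'M[C]_n) : linear (sandwich K).
Proof. by move=> a M N; rewrite /sandwich mulmxDr mulmxDl -scalemxAr -scalemxAl. Qed.

Lemma psd_sandwich n (K M : 'M[C]_n) : psd M -> psd (sandwich K M).
Proof. exact: psd_congr. Qed.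

Lemma loewner_le_sandwich n (K N P : 'M[C]_n) :
  loewner_le N P -> loewner_le (sandwich K N) (sandwich K P).
Proof. by move=> NP; rewrite /loewner_le /sandwich -mulmxBl -mulmxBr; exact: psd_congr. Qed.

Lemma pair_of_mxvec_indexE k n (i : 'I_k) (r : 'I_n) :
  pair_of_index (mxvec_index i r) = (i, r).
Proof. by rewrite /pair_of_index /mxvec_index cast_ordK enum_rankK. Qed.

Lemma sum_mxvec_index k n (V : nmodType) (F : 'I_(k * n) -> V) :
  \sum_p F p = \sum_i \sum_r F (mxvec_index i r).
Proof.
rewrite pair_big /=; apply: reindex.
exists (@pair_of_index k n) => [[i r] _ | p _] /=; first exact: pair_of_mxvec_indexE.
by case/mxvec_indexP: p => i r; rewrite pair_of_mxvec_indexE.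
Qed.

(* [1_k (x) K], in the index convention of [id_tensor]. *)
Definition idtens_mx k n (K : 'M[C]_n) : 'M[C]_(k * n) :=
  \matrix_(p, q) (((pair_of_index p).1 == (pair_of_index q).1)%:R *
                  K (pair_of_index p).2 (pair_of_index q).2).

Lemma idtens_mxE k n (K : 'M[C]_n) i r j s :
  idtens_mx k K (mxvec_index i r) (mxvec_index j s) = (i == j)%:R * K r s.
Proof. by rewrite mxE !pair_of_mxvec_indexE. Qed.

Lemma mul_idtens_mx k n m (K : 'M[C]_n) (Z : 'M[C]_(k * n, m)) i r q :
  (idtens_mx k K *m Z) (mxvec_index i r) q = \sum_u K r u * Z (mxvec_index i u) q.
Proof.
rewrite mxE sum_mxvec_index (bigD1 i) //= [X in _ + X]big1 ?addr0 => [|j ji].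
  by apply: eq_bigr => u _; rewrite idtens_mxE eqxx mul1r.
by rewrite big1 // => u _; rewrite idtens_mxE eq_sym (negbTE ji) !mul0r.
Qed.

Lemma mul_mx_adj_idtens k n m (K : 'M[C]_n) (Z : 'M[C]_(m, k * n)) p j s :
  (Z *m adj (idtens_mx k K)) p (mxvec_index j s) =
  \sum_t Z p (mxvec_index j t) * (K s t)^*.
Proof.
rewrite mxE sum_mxvec_index (bigD1 j) //= [X in _ + X]big1 ?addr0 => [|i ij].
  by apply: eq_bigr => t _; rewrite adjE idtens_mxE eqxx mul1r.
by rewrite big1 // => t _; rewrite adjE idtens_mxE eq_sym (negbTE ij) mul0r conjC0 mulr0.
Qed.

Lemma id_tensor_sandwich k n (K : 'M[C]_n) (Y : 'M[C]_(k * n)) :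
  id_tensor (sandwich K) Y = sandwich (idtens_mx k K) Y.
Proof.
apply/matrixP => p q; case/mxvec_indexP: p => i r; case/mxvec_indexP: q => j s.
rewrite mxE !pair_of_mxvec_indexE /sandwich mul_mx_adj_idtens mxE.
apply: eq_bigr => t _; rewrite mul_idtens_mx !mxE; congr (_ * _).
by apply: eq_bigr => u _; rewrite mxE.
Qed.

Lemma completely_positive_sandwich n (K : 'M[C]_n) : completely_positive (sandwich K).
Proof. by move=> k Y hY; rewrite id_tensor_sandwich; exact: psd_sandwich. Qed.

Lemma LF1_sandwich n (K : 'M[C]_n) :
  trace_nonincreasing (sandwich K) -> LF1 (sandwich K).
Proof.
move=> htr; split.
  by split; [exact: linear_sandwich | split; [exact: completely_positive_sandwich|]].
exists K; split => // v.
have := htr _ (psd_gram v).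
rewrite /sandwich mulmxA -(mulmxA (K *m v)) -adj_mul mxtrace_mulC.
rewrite [X in _ <= X]mxtrace_mulC !trace_mx11 adj_mul !mulmxA => hv.
rewrite mulmxBr mulmxBl mulmx1 !mulmxA.
have -> : forall B1 B2 : 'M[C]_1, (B1 - B2) 0 0 = B1 0 0 - B2 0 0.
  by move=> B1 B2; rewrite !mxE.
by rewrite subr_ge0.
Qed.

End Sandwich.

Section KrausDecomposition.
Variable R : realType.
Local Notation C := R[i].

Lemma psd_adj n (M : 'M[C]_n) : psd M -> adj M = M.
Proof. by move=> hM; apply/matrixP => i j; rewrite adjE (psd_hermitian i j hM) conjCK. Qed.

(* Spectral theorem: [M = P^dag diag(d) P] with [P] unitary and [d >= 0],
   so [S = P^dag diag(sqrt d)]. *)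
Lemma psd_gram_factor n (M : 'M[C]_n) : psd M -> exists S : 'M[C]_n, M = S *m adj S.
Proof.
move=> hM.
have tstarE m p (B : 'M[C]_(m, p)) : (B ^t Num.conj)%sesqui = adj B.
  by apply/matrixP => i j; rewrite !mxE.
have /orthomx_spectralP : M \is normalmx by apply/normalmxP; rewrite tstarE psd_adj.
set P := spectralmx M; set d := spectral_diag M.
have Pu : P *m adj P = 1%:M by rewrite -tstarE; apply/unitarymxP/spectral_unitarymx.
rewrite invmx_unitary ?spectral_unitarymx // tstarE => Meq.
have d_ge0 l : 0 <= d 0 l.
  have := psd_diag_ge0 l (psd_congr P hM).
  by rewrite Meq !mulmxA Pu mul1mx -mulmxA Pu mulmx1 mxE eqxx mulr1n.
pose sq : 'rV[C]_n := \row_l sqrtC (d 0 l).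
exists (adj P *m diag_mx sq).
have sq_adj : adj (diag_mx sq) = diag_mx sq.
  apply/matrixP => a b; rewrite adjE !mxE eq_sym.
  by case: eqP => [->|]; rewrite ?mulr1n ?mulr0n ?conjC0 // ge0_conjC ?sqrtC_ge0.
rewrite adj_mul adjK sq_adj -!mulmxA (mulmxA (diag_mx sq)) mulmx_diag.
suff -> : \row_j (sq 0 j * sq 0 j) = d by rewrite Meq mulmxA.
by apply/rowP => j; rewrite !mxE -expr2 sqrtCK.
Qed.

Variables (n : nat) (E : 'M[C]_n -> 'M[C]_n).
Hypothesis linE : linear E.

Lemma linear_mx_entry (M : 'M[C]_n) r s :
  E M r s = \sum_i \sum_j M i j * E (delta_mx i j) r s.
Proof.
pose El : {linear 'M[C]_n -> 'M[C]_n} := HB.pack E (GRing.isLinear.Build _ _ _ _ E linE).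
rewrite -[E]/(El : _ -> _).
rewrite [in LHS](matrix_sum_delta M) linear_sum summxE; apply: eq_bigr => i _.
by rewrite linear_sum summxE; apply: eq_bigr => j _; rewrite linearZ mxE.
Qed.

(* The Choi matrix of [E] is [id_tensor E] applied to the projector onto the
   unnormalized maximally entangled vector [\sum_i e_i (x) e_i]. *)
Definition choi_vector : 'cV[C]_(n * n) :=
  \col_p ((pair_of_index p).1 == (pair_of_index p).2)%:R.

Lemma choi_entry i r j s :
  id_tensor E (choi_vector *m adj choi_vector) (mxvec_index i r) (mxvec_index j s)
  = E (delta_mx i j) r s.
Proof.
rewrite mxE !pair_of_mxvec_indexE /=; congr (E _ r s).
apply/matrixP => a b; rewrite !mxE big_ord1 !mxE !pair_of_mxvec_indexE /=.
rewrite [a == i]eq_sym [b == j]eq_sym.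
by case: (i == a); case: (j == b); rewrite /= ?conjC1 ?conjC0 ?mulr1 ?mulr0 ?mul0r.
Qed.

(* Factor the Choi matrix as [S S^dag]; column [l] of [S], reshaped, is [K_l]. *)
Lemma kraus_decomposition : completely_positive E ->
  exists Ks : 'I_(n * n) -> 'M[C]_n, forall M, E M = \sum_l sandwich (Ks l) M.
Proof.
move=> cpE.
have [S choiE] := psd_gram_factor (cpE _ _ (psd_gram choi_vector)).
exists (fun l => \matrix_(r, i) S (mxvec_index i r) l) => M.
apply/matrixP => r s; rewrite linear_mx_entry summxE.
under eq_bigr do under eq_bigr do rewrite -choi_entry choiE mxE big_distrr /=.
under [RHS]eq_bigr do rewrite /sandwich mxE.
under [RHS]eq_bigr do under eq_bigr do rewrite !mxE big_distrl /=.
rewrite [RHS]exchange_big /=; under [RHS]eq_bigr do rewrite exchange_big /=.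
rewrite [RHS]exchange_big /=.
apply: eq_bigr => i _; apply: eq_bigr => j _; apply: eq_bigr => l _.
by rewrite !mxE; ring.
Qed.

Lemma kraus_trace_nonincreasing (I : finType) (Ks : I -> 'M[C]_n) l :
  (forall N, E N = \sum_k sandwich (Ks k) N) -> trace_nonincreasing E ->
  trace_nonincreasing (sandwich (Ks l)).
Proof.
move=> EK trE N psdN; apply: le_trans (trE N psdN); rewrite EK raddf_sum (bigD1 l) //=.
by rewrite lerDl; apply: sumr_ge0 => k _; apply/psd_trace_ge0/psd_sandwich.
Qed.

End KrausDecomposition.

Local Open Scope complex_scope.

Section Robustness.
Variables (R : realType) (X A : finType) (n : nat).
Local Notation C := R[i].
Local Notation M := 'M[C]_n.

(* Hidden variables range over an arbitrary finite type, so that a mixture of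
   models can be indexed by a dependent sum of their hidden-variable types. *)
Record lhs_model := LhsModel {
  lhs_var : finType;
  lhs_weight : lhs_var -> R;
  lhs_resp : lhs_var -> X -> A -> R;
  lhs_state : lhs_var -> M }.
Arguments lhs_weight : clear implicits.
Arguments lhs_resp : clear implicits.
Arguments lhs_state : clear implicits.

Definition lhs_valid (W : lhs_model) : Prop :=
  [/\ forall l, 0 <= lhs_weight W l,
      forall l x a, 0 <= lhs_resp W l x a,
      forall l x, \sum_a lhs_resp W l x a = 1
    & forall l, density (lhs_state W l)].

Definition lhs_assemblage (W : lhs_model) : X -> A -> M :=
  fun x a => \sum_l (lhs_weight W l * lhs_resp W l x a)%:C *: lhs_state W l.

Lemma LHS_modelP (tau : X -> A -> M) :
  Defs.LHS tau <->
  exists W, [/\ lhs_valid W, \sum_l lhs_weight W l = 1 & lhs_assemblage W = tau].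
Proof.
split=> [[m [p [q [rho [p0 [p1 [q0 [q1 [rho1 tauE]]]]]]]]] | [W [[p0 q0 q1 rho1] p1 tauE]]].
  exists (LhsModel p q rho); split => //.
  by apply: funext => x; apply: funext => a; rewrite tauE.
have enumE (V : nmodType) (F : lhs_var W -> V) :
    \sum_l F l = \sum_(i < #|lhs_var W|) F (enum_val i).
  by rewrite -(big_enum_val (A := lhs_var W)); apply: eq_bigl => l; rewrite inE.
exists #|lhs_var W|, (fun i => lhs_weight W (enum_val i)),
  (fun i => lhs_resp W (enum_val i)), (fun i => lhs_state W (enum_val i)).
split; first by move=> i; exact: p0.
split; first by rewrite -enumE.
split; first by move=> i; exact: q0.
split; first by move=> i; exact: q1.
split; first by move=> i; exact: rho1.
by move=> x a; rewrite -tauE /lhs_assemblage enumE.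
Qed.

Lemma sum_sigT (L : finType) (J : L -> finType) (V : nmodType) (F : forall l, J l -> V) :
  \sum_(t : {l : L & J l}) F (tag t) (tagged t) = \sum_l \sum_(j : J l) F l j.
Proof. by rewrite sig_big_dep; apply: eq_bigl. Qed.

Lemma LHS_conv (L : finType) (P : pred L) (w : L -> R) (ts : L -> X -> A -> M) :
  (forall l, P l -> Defs.LHS (ts l)) -> (forall l, P l -> 0 <= w l) ->
  \sum_(l | P l) w l = 1 ->
  Defs.LHS (fun x a => \sum_(l | P l) (w l)%:C *: ts l x a).
Proof.
move=> hts w_ge0 w_sum1.
have /boolp.choice [W hW] : forall l, exists W, lhs_valid W /\
    (P l -> \sum_v lhs_weight W v = 1 /\ lhs_assemblage W = ts l).
  move=> l; case: (boolP (P l)) => Pl; last first.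
    exists (LhsModel (fun v : void => 0) (fun _ _ _ => 0) (fun _ => 0)).
    by split; [split; case|].
  by have /LHS_modelP [W [? ? ?]] := hts l Pl; exists W.
pose wP l := if P l then w l else 0.
have wP_ge0 l : 0 <= wP l by rewrite /wP; case: ifP => // /w_ge0.
apply/LHS_modelP.
exists (LhsModel (fun t : {l : L & lhs_var (W l)} => wP (tag t) * lhs_weight _ (tagged t))
                 (fun t => lhs_resp _ (tagged t)) (fun t => lhs_state _ (tagged t))).
split.
- split=> [t | t x a | t x | t] /=; have [p0 q0 q1 rho1] := (hW (tag t)).1 => //.
  exact: mulr_ge0.
- rewrite /= (sum_sigT (fun l v => wP l * lhs_weight (W l) v)) -w_sum1 [RHS]big_mkcond /=.
  apply: eq_bigr => l _; rewrite -big_distrr /= /wP.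
  by case: ifP => Pl; [rewrite (proj1 ((hW l).2 Pl)) mulr1 | rewrite mul0r].
- apply: funext => x; apply: funext => a; rewrite /lhs_assemblage /=.
  rewrite (sum_sigT (fun l v =>
    (wP l * lhs_weight (W l) v * lhs_resp (W l) v x a)%:C *: lhs_state (W l) v)).
  rewrite [RHS]big_mkcond /=; apply: eq_bigr => l _; rewrite /wP.
  case: ifP => Pl; last by rewrite big1 // => v _; rewrite !mul0r rmorph0 scale0r.
  rewrite -(proj2 ((hW l).2 Pl)) /lhs_assemblage scaler_sumr.
  by apply: eq_bigr => v _; rewrite scalerA -rmorphM mulrA.
Qed.

Lemma LHS_is_SA (tau : X -> A -> M) : Defs.LHS tau -> is_SA tau.
Proof.
move=> /LHS_modelP [W [[p0 q0 q1 rho1] p1 <-]].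
exists (\sum_l (lhs_weight W l)%:C *: lhs_state W l); split; [|split].
- move=> x a; apply: psd_sum => l _; apply: psdZ; first by rewrite ler0c mulr_ge0.
  by case: (rho1 l).
- move=> x; rewrite exchange_big /=; apply: eq_bigr => l _.
  by rewrite -scaler_suml -rmorph_sum -big_distrr /= q1 mulr1.
- rewrite raddf_sum /=.
  under eq_bigr => l _ do rewrite mxtraceZ (proj2 (rho1 l)) mulr1.
  by rewrite -rmorph_sum p1.
Qed.

Lemma is_SA_conv (L : finType) (P : pred L) (w : L -> R) (xs : L -> X -> A -> M) :
  (forall l, P l -> is_SA (xs l)) -> (forall l, P l -> 0 <= w l) ->
  \sum_(l | P l) w l = 1 ->
  is_SA (fun x a => \sum_(l | P l) (w l)%:C *: xs l x a).
Proof.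
move=> hxs w_ge0 w_sum1.
have /boolp.choice [rho hrho] : forall l, exists rho : M, P l -> is_SA_red (xs l) rho.
  move=> l; case: (boolP (P l)) => Pl; last by exists 0.
  by have [rho hr] := hxs l Pl; exists rho.
exists (\sum_(l | P l) (w l)%:C *: rho l); split; [|split].
- move=> x a; apply: psd_sum => l Pl; apply: psdZ; first by rewrite ler0c w_ge0.
  by have [h _] := hrho l Pl; exact: h.
- move=> x; rewrite exchange_big /=; apply: eq_bigr => l Pl.
  by rewrite -scaler_sumr; have [_ [-> _]] := hrho l Pl.
- rewrite raddf_sum /=.
  under eq_bigr => l Pl do rewrite mxtraceZ (proj2 (proj2 (hrho l Pl))) mulr1.
  by rewrite -rmorph_sum w_sum1.
Qed.

Definition SR_feasible (s : X -> A -> M) (t : R) : Prop :=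
  0 <= t /\ exists xi tau : X -> A -> M,
    [/\ is_SA xi, Defs.LHS tau &
        forall x a, ((1 + t)^-1)%:C *: (s x a + t%:C *: xi x a) = tau x a].

Lemma SR_le_feasible (s : X -> A -> M) t : SR_feasible s t -> (SR s <= t%:E)%E.
Proof.
move=> [t0 [xi [tau [? ? ?]]]]; apply: ereal_inf_lbound; exists t => //.
by split=> //; exists xi, tau.
Qed.

Lemma SR_lt_feasible (s : X -> A -> M) r :
  (SR s < r%:E)%E -> exists2 t, SR_feasible s t & t < r.
Proof.
move/ereal_inf_lt => [_ [t [t0 [xi [tau [? [? ?]]]]] <-]]; rewrite lte_fin => tr.
by exists t => //; split=> //; exists xi, tau.
Qed.

Lemma SR_ge0 (s : X -> A -> M) : (0 <= SR s)%E.
Proof. by apply: le_ereal_inf_tmp => _ [t [t0 _] <-]; rewrite lee_fin. Qed.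

Lemma SR_feasible_conv (L : finType) (P : pred L) (w : L -> R) (ss : L -> X -> A -> M) t :
  0 <= t -> (forall l, P l -> SR_feasible (ss l) t) -> (forall l, P l -> 0 <= w l) ->
  \sum_(l | P l) w l = 1 ->
  SR_feasible (fun x a => \sum_(l | P l) (w l)%:C *: ss l x a) t.
Proof.
move=> t0 hss w_ge0 w_sum1.
have /boolp.choice [f hf] : forall l, exists xt : (X -> A -> M) * (X -> A -> M),
    P l -> [/\ is_SA xt.1, Defs.LHS xt.2 &
      forall x a, ((1 + t)^-1)%:C *: (ss l x a + t%:C *: xt.1 x a) = xt.2 x a].
  move=> l; case: (boolP (P l)) => Pl; last by exists (fun _ _ => 0, fun _ _ => 0).
  by have [_ [xi [tau h]]] := hss l Pl; exists (xi, tau).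
split=> //.
exists (fun x a => \sum_(l | P l) (w l)%:C *: (f l).1 x a).
exists (fun x a => \sum_(l | P l) (w l)%:C *: (f l).2 x a).
split.
- by apply: is_SA_conv => // l Pl; have [] := hf l Pl.
- by apply: LHS_conv => // l Pl; have [] := hf l Pl.
- move=> x a; rewrite scaler_sumr -big_split /= scaler_sumr.
  apply: eq_bigr => l Pl; have [_ _ <-] := hf l Pl.
  by rewrite !scalerDr !scalerA; congr (_ *: _ + _ *: _); ring.
Qed.

Lemma SR_feasible_le (s : X -> A -> M) t r : SR_feasible s t -> t <= r -> SR_feasible s r.
Proof.
move=> [t0 [xi [tau [xiSA tauLHS tauE]]]] tr.
have [<-|ne] := eqVneq t r; first by split=> //; exists xi, tau.
have r0 : 0 < r by apply: le_lt_trans t0 _; rewrite lt_neqAle ne tr.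
split; first exact: ltW.
(* The same [tau] works at level [r], with the noise [xi] replaced by its
   mixture with [tau] with weights [t / r] and [(r - t) / r]. *)
pose w (b : bool) := if b then t / r else (r - t) / r.
pose xs (b : bool) := if b then xi else tau.
exists (fun x a => \sum_(b | predT b) (w b)%:C *: xs b x a), tau.
split=> //.
  apply: is_SA_conv => [[] _|[] _|] //=.
  - exact: LHS_is_SA.
  - by rewrite /w divr_ge0 // ltW.
  - by rewrite /w divr_ge0 ?subr_ge0 // ltW.
  - by rewrite big_bool /w /=; field; exact: lt0r_neq0.
move=> x a.
have r_neq0 : r != 0 by exact: lt0r_neq0.
have e : s x a + t%:C *: xi x a = (1 + t)%:C *: tau x a.
  rewrite -tauE scalerA -rmorphM mulfV ?rmorph1 ?scale1r //.
  by apply: lt0r_neq0; rewrite ltr_pwDl.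
have mix : r%:C *: ((t / r)%:C *: xi x a + ((r - t) / r)%:C *: tau x a)
           = t%:C *: xi x a + (r - t)%:C *: tau x a.
  by rewrite scalerDr !scalerA -!rmorphM ![r * _]mulrC !divfK.
rewrite big_bool /= /w /xs mix addrA e -scalerDl -rmorphD scalerA -rmorphM.
rewrite (_ : 1 + t + (r - t) = 1 + r); last by ring.
by rewrite mulVf ?rmorph1 ?scale1r //; apply: lt0r_neq0; lra.
Qed.

Lemma SR_conv_le (L : finType) (P : pred L) (w : L -> R) (ss : L -> X -> A -> M) (s : \bar R) :
  (forall l, P l -> (SR (ss l) <= s)%E) -> (forall l, P l -> 0 <= w l) ->
  \sum_(l | P l) w l = 1 ->
  (SR (fun x a => (\sum_(l | P l) (w l)%:C *: ss l x a)%R) <= s)%E.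
Proof.
move=> hss w_ge0 w_sum1.
have [l0 Pl0] : exists l, P l.
  apply: boolp.contrapT => noP; move: w_sum1; rewrite big_pred0 => [/eqP|l].
    by rewrite eq_sym oner_eq0.
  by apply/negbTE/negP => Pl; apply: noP; exists l.
case: s hss => [s|_|hss]; last 2 first.
- by rewrite leey.
- by have := le_trans (SR_ge0 (ss l0)) (hss l0 Pl0).
move=> hss; apply/lee_addgt0Pr => e e0.
have feas_se l : P l -> SR_feasible (ss l) (s + e).
  move=> Pl; have /SR_lt_feasible [t ht /ltW] : (SR (ss l) < (s + e)%:E)%E.
    by apply: le_lt_trans (hss l Pl) _; rewrite lte_fin ltrDl.
  exact: SR_feasible_le.
rewrite -EFinD; apply/SR_le_feasible/SR_feasible_conv => //.
by have [] := feas_se l0 Pl0.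
Qed.

End Robustness.

Section FilteredAssemblages.
Variables (R : realType) (n : nat).
Local Notation C := R[i].
Local Notation M := 'M[C]_n.

Lemma SA_loewner_le (X A : finType) (sigma : X -> A -> M) (zeta : M) x a :
  is_SA_red sigma zeta -> loewner_le (sigma x a) zeta.
Proof.
move=> [psd_sigma [sum_sigma _]]; rewrite /loewner_le -(sum_sigma x) (bigD1 a) //=.
by rewrite [X in X - _]addrC addrK; apply: psd_sum.
Qed.

Lemma SA_reduced_psd (X A : finType) (sigma : X -> A -> M) (zeta : M) :
  is_SA_red sigma zeta -> X -> psd zeta.
Proof. by move=> [psd_sigma [sum_sigma _]] x; rewrite -(sum_sigma x); apply: psd_sum. Qed.

Variables (X A : finType) (sigma : X -> A -> M) (zeta : M).
Hypotheses (sigmaSA : is_SA_red sigma zeta) (psd_zeta : psd zeta).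

Lemma filtered_kraus_mixture (E : M -> M) (I : finType) (Ks : I -> M) :
  (forall N, E N = \sum_l sandwich (Ks l) N) -> 0 < \tr (E zeta) ->
  let P l := 0 < \tr (sandwich (Ks l) zeta) in
  exists w : I -> R, [/\ forall l, 0 <= w l, \sum_(l | P l) w l = 1 &
    filtered E sigma zeta =
    (fun x a => \sum_(l | P l) (w l)%:C%C *: filtered (sandwich (Ks l)) sigma zeta x a)].
Proof.
move=> EK pE_gt0 P.
set pE := \tr (E zeta); pose p l := \tr (sandwich (Ks l) zeta).
have p_ge0 l : 0 <= p l by apply/psd_trace_ge0/psd_sandwich.
have pE_neq0 : pE != 0 by rewrite gt_eqF.
have p0 l : ~~ P l -> p l = 0.
  by rewrite /P -/(p l) lt0r p_ge0 andbT => /negbNE/eqP.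
have w_ge0 l : 0 <= p l / pE by rewrite divr_ge0 // ltW.
exists (fun l => complex.Re (p l / pE)); split.
- by move=> l; rewrite -ler0c ge0_complexE.
- apply: (@complexI R); rewrite rmorph_sum rmorph1.
  under eq_bigr do rewrite /= ge0_complexE //.
  rewrite -mulr_suml -[1](divff pE_neq0); congr (_ / _).
  by rewrite /pE EK raddf_sum [RHS](bigID P) /= [X in _ = _ + X]big1 ?addr0.
- apply: funext => x; apply: funext => a.
  rewrite /filtered /= -/pE (EK (sigma x a)) scaler_sumr (bigID P) /=.
  rewrite [X in _ + X]big1 ?addr0 => [|l nPl].
    apply: eq_bigr => l Pl; rewrite ge0_complexE // scalerA; congr (_ *: _).
    by rewrite -/(p l) -/pE; field; rewrite pE_neq0 gt_eqF.
  have psd_sigma : psd (sigma x a) by case: sigmaSA.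
  have sigma_le := loewner_le_sandwich (Ks l) (SA_loewner_le x a sigmaSA).
  by rewrite (loewner_le_trace_eq0 (psd_sandwich _ psd_sigma) sigma_le (p0 _ nPl)) scaler0.
Qed.

Lemma SR_filtered_LF_le (E : M -> M) (s : \bar R) :
  LF E -> 0 < \tr (E zeta) ->
  (forall K, LF1 (sandwich K) -> 0 < \tr (sandwich K zeta) ->
     (SR (filtered (sandwich K) sigma zeta) <= s)%E) ->
  (SR (filtered E sigma zeta) <= s)%E.
Proof.
move=> [linE [cpE trE]] pE_gt0 hK.
have [Ks EK] := kraus_decomposition linE cpE.
have [w [w_ge0 w_sum1 ->]] := filtered_kraus_mixture EK pE_gt0.
apply: SR_conv_le => // l Pl; apply: hK => //.
exact/LF1_sandwich/(kraus_trace_nonincreasing l EK trE).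
Qed.

End FilteredAssemblages.

Lemma LF1_sandwich1 (R : realType) n : LF1 (sandwich (1%:M : 'M[R[i]]_n)).
Proof. by apply: LF1_sandwich => N _; rewrite /sandwich adj1mx mul1mx mulmx1. Qed.

Local Open Scope classical_set_scope.

Theorem mainTheorem4 (R : realType) (X A : finType) (n : nat)
  (sigma : X -> A -> 'M[R[i]]_n) (zeta : 'M[R[i]]_n) :
  is_SA_red sigma zeta ->
  ereal_sup [set SR (filtered E sigma zeta) |
               E in [set E : 'M[R[i]]_n -> 'M[R[i]]_n |
                       LF1 E /\ 0 < \tr (E zeta)]]
  = ereal_sup [set SR (filtered E sigma zeta) |
               E in [set E : 'M[R[i]]_n -> 'M[R[i]]_n |
                       LF E /\ 0 < \tr (E zeta)]].
Proof.
move=> sigmaSA; apply/eqP; rewrite eq_le; apply/andP; split.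
  by apply: ereal_sup_le; apply: image_subset => E [[LFE _] pos]; split.
apply: ge_ereal_sup => _ [E [LFE pE_gt0] <-].
set sup1 := ereal_sup _.
have sup_ub K : LF1 (sandwich K) -> 0 < \tr (sandwich K zeta) ->
    (SR (filtered (sandwich K) sigma zeta) <= sup1)%E.
  by move=> LF1K pK; apply: ereal_sup_ubound; exists (sandwich K).
have [x0 _ | noX] := pickP (@predT X).
  exact: (SR_filtered_LF_le sigmaSA (SA_reduced_psd sigmaSA x0)).
(* Without inputs [zeta] need not be psd, but then all assemblages coincide. *)
have -> : filtered E sigma zeta = filtered (sandwich 1%:M) sigma zeta.
  by apply: funext => x; have := noX x.
apply: sup_ub; first exact: LF1_sandwich1.
by rewrite /sandwich adj1mx mul1mx mulmx1 (proj2 (proj2 sigmaSA)) ltr01.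
Qed.
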